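(* Let $\beta=(\beta_1,\ldots,\beta_\ell)$ be a composition of $N$ and $\mathcal{P}$ a subposet of the total order $1<\cdots<\ell$. The following are equivalent: (P1) $\mathcal{P}$ is a normal subposet of $1<\cdots<\ell$ (i.e. $(\beta,\mathcal{P})$ is a unipotent polytope); (P2) $\mathrm{fat}_\beta(\mathcal{P})$ is a normal (and Levi compatible) subposet of $\mathcal{Q}_\beta$; (P3) $P_\beta\subseteq N_{\mathrm{GL}_N}(\mathrm{UT}_{(\beta,\mathcal{P})})$.
   Context: Fix a prime power $q$; $\mathrm{GL}_N=\mathrm{GL}_N(\mathbb{F}_q)$. A subposet of a poset $(X,\prec_{\mathcal{R}})$ is a strict partial order $\prec_{\mathcal{P}}$ on the same set with $a\prec_{\mathcal{P}}b\Rightarrow a\prec_{\mathcal{R}}b$; it is normal if $j\prec_{\mathcal{P}}k$ implies $i\prec_{\mathcal{P}}k$ and $j\prec_{\mathcal{P}}l$ for all $i\prec_{\mathcal{R}}j$, $k\prec_{\mathcal{R}}l$. For a subposet $\mathcal{R}$ of $1<\cdots<N$, $\mathfrak{ut}_{\mathcal{R}}=\{x\in M_N(\mathbb{F}_q)\mid x_{ab}\neq0\Rightarrow a\prec_{\mathcal{R}}b\}$, $\mathrm{UT}_{\mathcal{R}}=\mathrm{Id}_N+\mathfrak{ut}_{\mathcal{R}}$. For a composition $\beta$ of $N$ with $\ell$ parts, $\mathcal{Q}_i=\{\beta_1+\cdots+\beta_{i-1}+1,\ldots,\beta_1+\cdots+\beta_i\}$; $\mathcal{Q}_\beta$ is the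 poset on $\{1,\ldots,N\}$ with $a\prec b$ iff $a\in\mathcal{Q}_i,b\in\mathcal{Q}_j,i<j$; $\mathrm{UT}_\beta=\mathrm{UT}_{\mathcal{Q}_\beta}$; $L_\beta$ is the block-diagonal subgroup $\mathrm{GL}_{\beta_1}\times\cdots\times\mathrm{GL}_{\beta_\ell}$ (blocks indexed by the $\mathcal{Q}_i$); $P_\beta=L_\beta\ltimes\mathrm{UT}_\beta$ (invertible block upper triangular matrices). A subposet $\mathcal{R}$ of $\mathcal{Q}_\beta$ is Levi compatible if $L_\beta\subseteq N_{\mathrm{GL}_N}(\mathrm{UT}_{\mathcal{R}})$. For a subposet $\mathcal{P}$ of $1<\cdots<\ell$, $\mathrm{fat}_\beta(\mathcal{P})$ is the poset on $\{1,\ldots,N\}$ with $a\prec b$ iff $a\in\mathcal{Q}_i,b\in\mathcal{Q}_j$ with $i\prec_{\mathcal{P}}j$, and $\mathrm{UT}_{(\beta,\mathcal{P})}=\mathrm{UT}_{\mathrm{fat}_\beta(\mathcal{P})}$. *)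

From HB Require Import structures.
From mathcomp Require Import all_boot all_order all_algebra all_fingroup.
Unset Printing Implicit Defensive.
Import GRing.Theory.
Local Open Scope ring_scope.

(* Indices are 0-based: {1,...,N} is 'I_N, {1,...,l} is 'I_l. *)

Definition is_subposet (T : Type) (R P : rel T) : Prop :=
  [/\ irreflexive P, transitive P & forall a b, P a b -> R a b].
Arguments is_subposet {T} R P.

Definition normal_subposet (T : Type) (R P : rel T) : Prop :=
  forall i j k l, P j k -> (R i j -> P i k) /\ (R k l -> P j l).
Arguments normal_subposet {T} R P.

Definition total_order (n : nat) : rel 'I_n := fun a b => (a < b)%N.

Definition blockQ (l N : nat) (beta : 'I_l -> nat) (i : 'I_l) : {set 'I_N} :=
  [set a : 'I_N | (\sum_(j < l | (j < i)%N) beta j <= a)%N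
                  && (a < \sum_(j < l | (j <= i)%N) beta j)%N].
Arguments blockQ {l} N beta i.

Definition is_composition (l N : nat) (beta : 'I_l -> nat) : Prop :=
  (forall i, 0 < beta i)%N /\ (\sum_(i < l) beta i)%N = N.
Arguments is_composition {l} N beta.

Definition fat (l N : nat) (beta : 'I_l -> nat) (P : rel 'I_l) : rel 'I_N :=
  fun a b => [exists i : 'I_l, exists j : 'I_l,
               [&& a \in blockQ N beta i, b \in blockQ N beta j & P i j]].
Arguments fat {l} N beta P.

Definition Qbeta (l N : nat) (beta : 'I_l -> nat) : rel 'I_N :=
  fat N beta (@total_order l).
Arguments Qbeta {l} N beta.


Definition ut (F : finFieldType) (N : nat) (R : rel 'I_N) : {set 'M[F]_N} :=
  [set x : 'M[F]_N | [forall a, forall b, (x a b != 0) ==> R a b]].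
Arguments ut F {N} R.
Definition UT (F : finFieldType) (N : nat) (R : rel 'I_N) : {set 'M[F]_N} :=
  [set 1%:M + x | x in ut F R].
Arguments UT F {N} R.

Definition normGL (F : finFieldType) (N : nat) (S : {set 'M[F]_N}) : {set 'M[F]_N} :=
  [set g : 'M[F]_N | (g \in unitmx) && ([set invmx g *m h *m g | h in S] == S)].
Arguments normGL F {N} S.

Definition Levi (F : finFieldType) (l N : nat) (beta : 'I_l -> nat) : {set 'M[F]_N} :=
  [set g : 'M[F]_N | (g \in unitmx) &&
     [forall a, forall b, (g a b != 0) ==>
        [exists i : 'I_l, (a \in blockQ N beta i) && (b \in blockQ N beta i)]]].
Arguments Levi F {l} N beta.

Definition Parabolic (F : finFieldType) (l N : nat) (beta : 'I_l -> nat) : {set 'M[F]_N} :=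
  [set g : 'M[F]_N | (g \in unitmx) &&
     [forall a, forall b, (g a b != 0) ==>
        [exists i : 'I_l, exists j : 'I_l,
           [&& a \in blockQ N beta i, b \in blockQ N beta j & (i <= j)%N]]]].
Arguments Parabolic F {l} N beta.

Definition levi_compatible (F : finFieldType) (l N : nat) (beta : 'I_l -> nat) (R : rel 'I_N) : Prop :=
  Levi F N beta \subset normGL F (UT F R).
Arguments levi_compatible F {l} N beta R.

From HB Require Import structures.
From mathcomp Require Import all_boot all_order all_algebra all_fingroup.
From mathcomp Require Import zify.
Import GRing.Theory.

(* Membership in fat_beta(P) is read off blockwise: a and b are related iff P
   relates their blocks.  Hence the poset axioms and normality pass back and
   forth between P and fat_beta(P).  A matrix g normalises UT_R iff conjugation
   by g preserves the support condition R.  For g in P_beta the support of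
   g^-1 x g lies in (<=) o fat(P) o (<=) (block order), which normality of P
   puts inside fat(P).  Conversely, conjugating E_cd (with P j k) by the
   transvections 1 + E_ac (a in a block i < j) and 1 + E_de (e in a block
   m > k) creates a nonzero entry at (a, d), resp. (c, e), forcing P i k,
   resp. P j m.  Levi compatibility follows from L_beta <= P_beta. *)

Section Blocks.
Variables (l N : nat) (beta : 'I_l -> nat).

Definition block_start (m : nat) : nat := \sum_(j < l | (j < m)%N) beta j.

Lemma block_start_mono (m n : nat) :
  (m <= n)%N -> (block_start m <= block_start n)%N.
Proof.
move=> le_mn; rewrite /block_start [X in (X <= _)%N]big_mkcond.
rewrite [X in (_ <= X)%N]big_mkcond; apply: leq_sum => j _.
by case: ifP => // lt_jm; rewrite (leq_trans lt_jm le_mn).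
Qed.

Lemma block_startS (i : 'I_l) : block_start i.+1 = (block_start i + beta i)%N.
Proof.
rewrite /block_start (bigD1 i) //= addnC; congr (_ + _)%N.
apply: eq_bigl => j; case: (eqVneq j i) => [->|ne]; first by rewrite ltnn andbF.
by rewrite ltnS andbT ltn_neqAle ne.
Qed.

Lemma block_start_total : block_start l = (\sum_(i < l) beta i)%N.
Proof. by apply: eq_bigl => j; rewrite ltn_ord. Qed.

Lemma mem_blockQ (i : 'I_l) (a : 'I_N) :
  (a \in blockQ N beta i) = (block_start i <= a < block_start i.+1)%N.
Proof. by rewrite inE. Qed.

Lemma blockQ_uniq (i j : 'I_l) (a : 'I_N) :
  a \in blockQ N beta i -> a \in blockQ N beta j -> i = j.
Proof.
rewrite !mem_blockQ => /andP[ai ia] /andP[aj ja]; apply: val_inj => /=.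
by case: (ltngtP i j) => // ij; have := block_start_mono _ _ ij; lia.
Qed.

Arguments blockQ_uniq {i j a}.

Lemma fatE (P : rel 'I_l) (i j : 'I_l) (a b : 'I_N) :
  a \in blockQ N beta i -> b \in blockQ N beta j -> fat N beta P a b = P i j.
Proof.
move=> ai bj; apply/existsP/idP => [[i' /existsP[j' /and3P[ai' bj' Pij']]]|Pij].
  by rewrite (blockQ_uniq ai ai') (blockQ_uniq bj bj').
by exists i; apply/existsP; exists j; rewrite ai bj Pij.
Qed.

Arguments fatE P {i j a b}.

Lemma blockQ_neq (i j : 'I_l) (a b : 'I_N) :
  a \in blockQ N beta i -> b \in blockQ N beta j -> (i < j)%N -> a != b.
Proof.
move=> ai bj lt_ij; apply: contraTneq lt_ij => eq_ab.
by rewrite eq_ab in ai; rewrite (blockQ_uniq ai bj) ltnn.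
Qed.

Hypothesis beta_composition : is_composition N beta.

Lemma blockQ_cover (a : 'I_N) : exists i : 'I_l, a \in blockQ N beta i.
Proof.
have [_ sum_beta] := beta_composition.
suff: forall m, (m <= l)%N -> (a < block_start m)%N ->
    exists i : 'I_l, a \in blockQ N beta i.
  by move=> /(_ l (leqnn l)); apply; rewrite block_start_total sum_beta.
elim=> [|m IHm] lt_ml; first by rewrite /block_start big_pred0.
case: (ltnP a (block_start m)) => [lt_a_m _|le_a_m lt_a_m].
  exact: IHm (ltnW lt_ml) lt_a_m.
by exists (Ordinal lt_ml); rewrite mem_blockQ le_a_m.
Qed.

Lemma blockQ_neq0 (i : 'I_l) : exists a : 'I_N, a \in blockQ N beta i.
Proof.
have [beta_gt0 sum_beta] := beta_composition.
have lt_start : (block_start i < block_start i.+1)%N.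
  by rewrite block_startS -addn1 leq_add2l beta_gt0.
have le_end : (block_start i.+1 <= N)%N.
  by rewrite -sum_beta -block_start_total block_start_mono.
by exists (Ordinal (leq_trans lt_start le_end)); rewrite mem_blockQ /= leqnn.
Qed.

Lemma fat_refl (R : rel 'I_l) : reflexive R -> reflexive (fat N beta R).
Proof. by move=> R_refl a; have [i ai] := blockQ_cover a; rewrite (fatE _ ai ai). Qed.

Lemma fat_comp (R1 R2 R3 : rel 'I_l) :
    (forall i j k, R1 i j -> R2 j k -> R3 i k) ->
  forall a b c, fat N beta R1 a b -> fat N beta R2 b c -> fat N beta R3 a c.
Proof.
move=> R123 a b c; have [i ai] := blockQ_cover a; have [j bj] := blockQ_cover b.
have [k ck] := blockQ_cover c; rewrite (fatE _ ai bj) (fatE _ bj ck) (fatE _ ai ck).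
exact: R123.
Qed.

Lemma fat_subposet (R P : rel 'I_l) :
  is_subposet R P -> is_subposet (fat N beta R) (fat N beta P).
Proof.
case=> P_irr P_trans P_sub; split.
- by move=> a; have [i ai] := blockQ_cover a; rewrite (fatE _ ai ai) P_irr.
- by move=> b a c; apply: fat_comp => i j k; apply: P_trans.
- move=> a b; have [i ai] := blockQ_cover a; have [j bj] := blockQ_cover b.
  by rewrite (fatE _ ai bj) (fatE _ ai bj); apply: P_sub.
Qed.

Lemma fat_normal (R P : rel 'I_l) :
  normal_subposet R P <-> normal_subposet (fat N beta R) (fat N beta P).
Proof.
split=> normP.
- move=> a b c d; have [i ai] := blockQ_cover a; have [j bj] := blockQ_cover b.
  have [k ck] := blockQ_cover c; have [m dm] := blockQ_cover d.
  rewrite (fatE _ bj ck) (fatE _ ai bj) (fatE _ ai ck) (fatE _ ck dm) (fatE _ bj dm).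
  exact: normP.
- move=> i j k m; have [a ai] := blockQ_neq0 i; have [b bj] := blockQ_neq0 j.
  have [c ck] := blockQ_neq0 k; have [d dm] := blockQ_neq0 m.
  have := normP a b c d.
  by rewrite (fatE _ bj ck) (fatE _ ai bj) (fatE _ ai ck) (fatE _ ck dm) (fatE _ bj dm).
Qed.

End Blocks.

Arguments blockQ_uniq {l N beta i j a}.
Arguments blockQ_neq {l N beta i j a b}.
Arguments blockQ_neq0 {l N beta}.
Arguments fat_subposet {l N beta} _ {R P}.
Arguments fat_normal {l N beta} _ R P.
Arguments fatE {l N beta} P {i j a b}.

Local Open Scope ring_scope.

Section Support.
Variables (R : pzSemiRingType) (n : nat).

Definition supported (e : rel 'I_n) (A : 'M[R]_n) : bool :=
  [forall a, forall b, (A a b != 0) ==> e a b].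

Lemma supportedP (e : rel 'I_n) (A : 'M[R]_n) :
  reflect (forall a b, A a b != 0 -> e a b) (supported e A).
Proof.
apply: (iffP forallP) => [eA a b|eA a]; first by move/forallP: (eA a) => /(_ b)/implyP.
by apply/forallP => b; apply/implyP; apply: eA.
Qed.

Lemma supported_mulmx (e1 e2 e3 : rel 'I_n) (A B : 'M[R]_n) :
    (forall a b c, e1 a b -> e2 b c -> e3 a c) ->
  supported e1 A -> supported e2 B -> supported e3 (A *m B).
Proof.
move=> e123 /supportedP e1A /supportedP e2B; apply/supportedP => a c.
rewrite mxE; apply: contraR => not_e3ac; rewrite big1 // => b _.
have [Aab0|/e1A e1ab] := eqVneq (A a b) 0; first by rewrite Aab0 mul0r.
have [Bbc0|/e2B e2bc] := eqVneq (B b c) 0; first by rewrite Bbc0 mulr0.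
by case/negP: not_e3ac; apply: e123 e1ab e2bc.
Qed.

Lemma supportedD (e : rel 'I_n) (A B : 'M[R]_n) :
  supported e A -> supported e B -> supported e (A + B).
Proof.
move=> /supportedP eA /supportedP eB; apply/supportedP => a b; rewrite mxE.
by have [Aab0|/eA//] := eqVneq (A a b) 0; rewrite Aab0 add0r => /eB.
Qed.

Lemma supported1 (e : rel 'I_n) : reflexive e -> supported e 1%:M.
Proof.
move=> e_refl; apply/supportedP => a b; rewrite mxE.
by case: (eqVneq a b) => [->|]; rewrite ?eqxx.
Qed.

Lemma supported_delta (e : rel 'I_n) (a b : 'I_n) :
  e a b -> supported e (delta_mx a b).
Proof.
move=> eab; apply/supportedP => c d; rewrite mxE.
by case: (eqVneq c a) => [->|]; case: (eqVneq d b) => [->|]; rewrite ?eqxx.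
Qed.

End Support.

Arguments supported {R n}.
Arguments supportedP {R n e A}.
Arguments supported_mulmx {R n e1 e2 e3 A B}.
Arguments supportedD {R n e A B}.
Arguments supported1 {R n e}.
Arguments supported_delta {R n e a b}.

(* Left multiplication by A is a bijection of the finite set of matrices
   supported by e, so it reaches 1. *)
Lemma supported_invmx (R : finComUnitRingType) (n : nat) (e : rel 'I_n)
    (A : 'M[R]_n) : reflexive e -> transitive e ->
  A \in unitmx -> supported e A -> supported e (invmx A).
Proof.
move=> e_refl e_trans A_unit eA.
pose S := [set B : 'M[R]_n | supported e B].
have mulA_inj : injective (mulmx A : 'M[R]_n -> 'M[R]_n) := can_inj (mulKmx A_unit).
have mulA_S : [set A *m B | B in S] = S.
  apply/eqP; rewrite eqEcard card_imset // leqnn andbT.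
  apply/subsetP => _ /imsetP[B + ->]; rewrite !inE.
  by apply: supported_mulmx eA => a b c; apply: e_trans.
have : 1%:M \in S by rewrite inE supported1.
rewrite -mulA_S => /imsetP[B + AB1]; rewrite inE.
by have -> : invmx A = B by rewrite -[B](mulKmx A_unit) -AB1 mulmx1.
Qed.

Arguments supported_invmx {R n e A}.

Section NormaliserUT.
Variables (F : finFieldType) (n : nat) (e : rel 'I_n).

Lemma conjmx_UT (g x : 'M[F]_n) : g \in unitmx ->
  invmx g *m (1%:M + x) *m g = 1%:M + invmx g *m x *m g.
Proof. by move=> g_unit; rewrite mulmxDr mulmx1 mulmxDl mulVmx. Qed.

Lemma normGL_UTP (g : 'M[F]_n) :
  g \in normGL F (UT F e) <->
  g \in unitmx /\ forall x, supported e x -> supported e (invmx g *m x *m g).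
Proof.
split.
  rewrite inE => /andP[g_unit /eqP conj_UT]; split=> // x ex.
  have : invmx g *m (1%:M + x) *m g \in UT F e.
    by rewrite -conj_UT; apply/imset_f/imset_f; rewrite inE.
  by rewrite conjmx_UT // => /imsetP[y + /addrI ->]; rewrite inE.
case=> g_unit conj_supp; rewrite inE g_unit /=.
have conj_inj : injective (fun h : 'M[F]_n => invmx g *m h *m g).
  move=> h1 h2 /(congr1 (fun m => g *m m *m invmx g)).
  by rewrite !mulmxA mulmxV // !mul1mx -!mulmxA mulmxV // !mulmx1.
rewrite eqEcard (card_imset _ conj_inj) leqnn andbT.
apply/subsetP => _ /imsetP[_ /imsetP[x + ->] ->]; rewrite inE => ex.
by rewrite conjmx_UT //; apply: imset_f; rewrite inE; apply: conj_supp.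
Qed.

End NormaliserUT.

Arguments normGL_UTP {F n e g}.

Section Transvections.
Variables (R : comUnitRingType) (n : nat).
Implicit Types a b c d : 'I_n.

Lemma transvection_inv a b : a != b ->
  (1%:M - delta_mx a b) *m (1%:M + delta_mx a b) = 1%:M :> 'M[R]_n.
Proof.
move=> neq_ab; rewrite mulmxBl mul1mx mulmxDr mulmx1 mul_delta_mx_cond.
by rewrite eq_sym (negbTE neq_ab) mulr0n addr0 addrK.
Qed.

Lemma invmx_transvection a b : a != b ->
  invmx (1%:M + delta_mx a b : 'M[R]_n) = 1%:M - delta_mx a b.
Proof.
move=> neq_ab; have AB1 := transvection_inv _ _ neq_ab.
have [_ unit_tv] := mulmx1_unit AB1.
by rewrite -[LHS]mul1mx -{1}AB1 -mulmxA mulmxV // mulmx1.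
Qed.

Lemma unit_transvection a b : a != b -> (1%:M + delta_mx a b : 'M[R]_n) \in unitmx.
Proof. by move=> neq_ab; have [] := mulmx1_unit (transvection_inv _ _ neq_ab). Qed.

Lemma conj_transvection_left a c d : a != d ->
  (1%:M - delta_mx a c) *m delta_mx c d *m (1%:M + delta_mx a c)
    = delta_mx c d - delta_mx a d :> 'M[R]_n.
Proof.
move=> neq_ad; rewrite mulmxBl mul1mx mul_delta_mx mulmxDr mulmx1 mulmxBl.
by rewrite !mul_delta_mx_cond eq_sym (negbTE neq_ad) !mulr0n subr0 addr0.
Qed.

Lemma conj_transvection_right c d e : c != e ->
  (1%:M - delta_mx d e) *m delta_mx c d *m (1%:M + delta_mx d e)
    = delta_mx c d + delta_mx c e :> 'M[R]_n.
Proof.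
move=> neq_ce; rewrite mulmxBl mul1mx mul_delta_mx_cond eq_sym (negbTE neq_ce).
by rewrite mulr0n subr0 mulmxDr mulmx1 mul_delta_mx.
Qed.

End Transvections.

Arguments invmx_transvection {R n a b}.
Arguments unit_transvection {R n a b}.

Lemma normGL_UT_transvection (F : finFieldType) (n : nat) (e : rel 'I_n)
    (a b c d : 'I_n) : a != b ->
  (1%:M + delta_mx a b : 'M[F]_n) \in normGL F (UT F e) -> e c d ->
  supported e
    ((1%:M - delta_mx a b : 'M[F]_n) *m delta_mx c d *m (1%:M + delta_mx a b)).
Proof.
move=> neq_ab /normGL_UTP[_ conj_supp] ecd.
by rewrite -invmx_transvection //; apply/conj_supp/supported_delta.
Qed.

Arguments normGL_UT_transvection {F n e a b} c d.

Section Parabolic.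
Variables (F : finFieldType) (l N : nat) (beta : 'I_l -> nat).
Hypothesis beta_composition : is_composition N beta.

Local Notation block_le := (fat N beta (fun i j : 'I_l => (i <= j)%N)).

Lemma Parabolic_supported (g : 'M[F]_N) :
  (g \in Parabolic F N beta) = (g \in unitmx) && supported block_le g.
Proof. by rewrite inE. Qed.

Lemma Levi_sub_Parabolic : Levi F N beta \subset Parabolic F N beta.
Proof.
apply/subsetP => g; rewrite !inE => /andP[-> /forallP g_diag] /=.
apply/forallP => a; apply/forallP => b; apply/implyP => gab.
move/forallP: (g_diag a) => /(_ b)/implyP/(_ gab)/existsP[i /andP[ai bi]].
by apply/existsP; exists i; apply/existsP; exists i; rewrite ai bi leqnn.
Qed.

Lemma normal_subposet_leq (P : rel 'I_l) (i j k m : 'I_l) :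
  normal_subposet (total_order l) P ->
  (i <= j)%N -> P j k -> (k <= m)%N -> P i m.
Proof.
move=> normP le_ij Pjk le_km.
have Pik : P i k.
  by move: le_ij; rewrite leq_eqVlt => /orP[/eqP/val_inj -> //|/(normP i j k k Pjk).1].
by move: le_km; rewrite leq_eqVlt => /orP[/eqP/val_inj <- //|/(normP i i k m Pik).2].
Qed.

Lemma Parabolic_sub_normGL (P : rel 'I_l) :
  normal_subposet (total_order l) P ->
  Parabolic F N beta \subset normGL F (UT F (fat N beta P)).
Proof.
move=> normP; apply/subsetP => g.
rewrite Parabolic_supported => /andP[g_unit g_le].
have le_refl : reflexive block_le by apply: fat_refl => // i; apply: leqnn.
have le_trans : transitive block_le.
  by move=> ???; apply: fat_comp => // i j k; apply: leq_trans.
have ginv_le := supported_invmx le_refl le_trans g_unit g_le.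
apply/normGL_UTP; split=> // x Px.
apply: supported_mulmx (supported_mulmx (e3 := fat N beta P) _ ginv_le Px) g_le.
- by apply: fat_comp => // i j k Pij; apply: normal_subposet_leq normP (leqnn i) Pij.
- by apply: fat_comp => // i j k le_ij Pjk; apply: normal_subposet_leq normP le_ij Pjk _.
Qed.

Lemma transvection_Parabolic (i j : 'I_l) (a c : 'I_N) :
  a \in blockQ N beta i -> c \in blockQ N beta j -> (i < j)%N ->
  (1%:M + delta_mx a c : 'M[F]_N) \in Parabolic F N beta.
Proof.
move=> ai cj lt_ij; have neq_ac := blockQ_neq ai cj lt_ij.
rewrite Parabolic_supported unit_transvection //=; apply: supportedD.
  by apply/supported1/fat_refl => // k; apply: leqnn.
by apply: supported_delta; rewrite (fatE _ ai cj) ltnW.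
Qed.

Arguments transvection_Parabolic {i j a c}.

Section Converse.
Variable P : rel 'I_l.
Hypothesis P_lt : forall i j, P i j -> (i < j)%N.
Hypothesis Parabolic_normalises :
  Parabolic F N beta \subset normGL F (UT F (fat N beta P)).

Lemma normGL_Parabolic_left (i j k : 'I_l) : P j k -> (i < j)%N -> P i k.
Proof.
move=> Pjk lt_ij; have lt_ik := ltn_trans lt_ij (P_lt _ _ Pjk).
have [a ai] := blockQ_neq0 beta_composition i.
have [c cj] := blockQ_neq0 beta_composition j.
have [d dk] := blockQ_neq0 beta_composition k.
have neq_ac := blockQ_neq ai cj lt_ij; have neq_ad := blockQ_neq ai dk lt_ik.
have tv_norm := subsetP Parabolic_normalises _ (transvection_Parabolic ai cj lt_ij).
have := normGL_UT_transvection c d neq_ac tv_norm.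
rewrite (fatE P cj dk) conj_transvection_left // => /(_ Pjk) /supportedP /(_ a d).
rewrite (fatE P ai dk); apply.
by rewrite !mxE eqxx (negbTE neq_ac) /= eqxx sub0r oppr_eq0 oner_eq0.
Qed.

Lemma normGL_Parabolic_right (j k m : 'I_l) : P j k -> (k < m)%N -> P j m.
Proof.
move=> Pjk lt_km; have lt_jm := ltn_trans (P_lt _ _ Pjk) lt_km.
have [c cj] := blockQ_neq0 beta_composition j.
have [d dk] := blockQ_neq0 beta_composition k.
have [e em] := blockQ_neq0 beta_composition m.
have neq_de := blockQ_neq dk em lt_km; have neq_ce := blockQ_neq cj em lt_jm.
have tv_norm := subsetP Parabolic_normalises _ (transvection_Parabolic dk em lt_km).
have := normGL_UT_transvection c d neq_de tv_norm.
rewrite (fatE P cj dk) conj_transvection_right // => /(_ Pjk) /supportedP /(_ c e).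
rewrite (fatE P cj em); apply.
by rewrite !mxE eqxx [e == d]eq_sym (negbTE neq_de) /= eqxx add0r oner_eq0.
Qed.

Lemma normGL_Parabolic_normal : normal_subposet (total_order l) P.
Proof.
move=> i j k m Pjk.
by split; [apply: normGL_Parabolic_left | apply: normGL_Parabolic_right].
Qed.

End Converse.

End Parabolic.

Arguments Parabolic_sub_normGL F {l N beta} _ {P}.
Arguments normGL_Parabolic_normal {F l N beta} _ {P}.

Theorem mainTheorem4 (F : finFieldType) (N l : nat) (beta : 'I_l -> nat)
  (P : rel 'I_l) :
  is_composition N beta ->
  is_subposet (total_order l) P ->
  (normal_subposet (total_order l) P <->
     [/\ is_subposet (Qbeta N beta) (fat N beta P),
         normal_subposet (Qbeta N beta) (fat N beta P)
       & levi_compatible F N beta (fat N beta P)]) /\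
  ([/\ is_subposet (Qbeta N beta) (fat N beta P),
       normal_subposet (Qbeta N beta) (fat N beta P)
     & levi_compatible F N beta (fat N beta P)] <->
     Parabolic F N beta \subset normGL F (UT F (fat N beta P))).
Proof.
move=> beta_comp P_subposet.
have fat_P_subposet := fat_subposet beta_comp P_subposet.
have fat_P_normal := fat_normal beta_comp (total_order l) P.
have [_ _ P_lt] := P_subposet.
have normal_Parabolic := Parabolic_sub_normGL F beta_comp (P := P).
have Levi_normalises := subset_trans (Levi_sub_Parabolic F l N beta).
split; split.
- by move=> normP; split; [|apply/fat_P_normal|apply/Levi_normalises/normal_Parabolic].
- by case=> _ /fat_P_normal.
- by case=> _ /fat_P_normal /normal_Parabolic.
- move=> Parabolic_normalises.
  have normP := normGL_Parabolic_normal beta_comp P_lt Parabolic_normalises.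
  by split; [|apply/fat_P_normal|apply/Levi_normalises].
Qed.
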